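(* Let $G=(V,E)$ be a connected undirected graph on $V=\{1,\dots,m\}$ without self-loops, with adjacency matrix $H$ ($h^i_j=1$ if $(i,j)\in E$, else $0$), Laplacian $\mathcal{L}=\Delta-H$ ($\Delta$ the diagonal degree matrix) and maximum degree $\Delta_{\max}$. Fix $0<c<1/\Delta_{\max}$ and let the priority vectors $w^i(k)=(w^i_1(k),\dots,w^i_m(k))$, $i=1,\dots,m$, evolve by $$w^i(k+1)=w^i(k)+c\sum_{j=1}^m h^i_j\,(w^j(k)-w^i(k)),$$ where each initial vector $w^i(0)$ has entries in $(0,1)$ summing to $1$. Define for every $k\ge 0$ the weights $a^i_j(k)=w^i_j(k)$ if $(i,j)\in E$; $a^i_i(k)=w^i_i(k)+\sum_{j\neq i,\,(i,j)\notin E} w^i_j(k)$; and $a^i_j(k)=0$ if $j\neq i$ and $(i,j)\notin E$. Let $\mu_0=\min_{i,j\in\{1,\dots,m\}} w^i_j(0)$. Then: (1) $a^i_i(k)\ge \mu_0$ for all $k\ge 0$ and all $i$; (2) $a^i_j(k)\ge \mu_0$ for all $k\ge 0$ and all $(i,j)\in E$; (3) $a^i_j(k)=0$ for all $k$ whenever $j\neq i$ and $(i,j)\notin E$.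
   Context: Agent $i$'s priority vector $w^i(k)$ assigns a priority $w^i_j(k)$ to the objective of every agent $j$. At the network level, $W(k+1)=(I-c\mathcal{L})W(k)$ where $W(k)$ is the matrix whose $i$-th row is $w^i(k)$. The weight $a^i_j(k)$ is the weight agent $i$ assigns to information from agent $j$ at iteration $k$: agent $i$ keeps its priority for neighbors, puts zero weight on non-neighbors, and adds the priorities of non-neighbors to its own self-weight. By convention $(i,i)\notin E$. *)

From mathcomp Require Import all_boot all_order all_algebra.
Set Implicit Arguments. Unset Strict Implicit. Unset Printing Implicit Defensive.
Import Order.TTheory GRing.Theory Num.Theory.
Local Open Scope ring_scope.

(* A simple undirected graph on vertex set 'I_m is a relation e : rel 'I_m
   that is symmetric and irreflexive; (i,j) \in E  <->  e i j. *)

Definition deg (m : nat) (e : rel 'I_m) (i : 'I_m) : nat := #|[set j | e i j]|.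

Definition maxdeg (m : nat) (e : rel 'I_m) : nat := (\max_(i < m) deg e i)%N.

Definition adj (R : ringType) (m : nat) (e : rel 'I_m) (i j : 'I_m) : R :=
  if e i j then 1 else 0.

(* One step: w^i(k+1) = w^i(k) + c * sum_j h^i_j (w^j(k) - w^i(k));
   W i is the row vector w^i, W i l = w^i_l. *)
Definition prio_step (R : ringType) (m : nat) (e : rel 'I_m) (c : R)
  (W : 'M[R]_m) : 'M[R]_m :=
  \matrix_(i, l) (W i l + c * \sum_(j < m) adj R e i j * (W j l - W i l)).

Fixpoint prio (R : ringType) (m : nat) (e : rel 'I_m) (c : R)
  (W0 : 'M[R]_m) (k : nat) : 'M[R]_m :=
  match k with
  | 0 => W0
  | k'.+1 => prio_step e c (prio e c W0 k')
  end.

Definition weight (R : ringType) (m : nat) (e : rel 'I_m) (c : R)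
  (W0 : 'M[R]_m) (k : nat) (i j : 'I_m) : R :=
  let W := prio e c W0 k in
  if e i j then W i j
  else if j == i then W i i + \sum_(l < m | (l != i) && ~~ e i l) W i l
  else 0.

From mathcomp Require Import all_boot all_order all_algebra.
From mathcomp Require Import ring.
Import Order.TTheory GRing.Theory Num.Theory.
Local Open Scope ring_scope.

(* Since c d_i <= c Delta_max < 1, the update
   w^i(k+1) = (1 - c d_i) w^i(k) + c \sum_{j ~ i} w^j(k)
   is a convex combination of the vectors w^i(k) and w^j(k), j ~ i, so every
   entry of every priority vector stays >= mu0 >= 0.  Hence a^i_j = w^i_j >= mu0
   on edges, and a^i_i >= w^i_i >= mu0 since the added terms are nonnegative. *)

Lemma sum_adj (R : nzRingType) (m : nat) (e : rel 'I_m) (i : 'I_m) :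
  \sum_(j < m) adj R e i j = (deg e i)%:R.
Proof.
rewrite /adj /deg -big_mkcond /=.
rewrite (eq_bigl (fun j => j \in [set j | e i j])); last by move=> j; rewrite inE.
by rewrite sumr_const.
Qed.

Lemma deg_le_maxdeg (m : nat) (e : rel 'I_m) (i : 'I_m) : (deg e i <= maxdeg e)%N.
Proof. exact: leq_bigmax. Qed.

Lemma prio_stepE (R : comNzRingType) (m : nat) (e : rel 'I_m) (c : R)
    (W : 'M[R]_m) (i l : 'I_m) :
  prio_step e c W i l =
    (1 - c * (deg e i)%:R) * W i l + c * \sum_(j < m) adj R e i j * W j l.
Proof.
rewrite mxE.
under eq_bigr do rewrite mulrBr.
by rewrite sumrB -mulr_suml sum_adj; ring.
Qed.

Section LowerBound.

Variables (R : numDomainType) (m : nat) (e : rel 'I_m) (c : R).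
Hypothesis c_ge0 : 0 <= c.
Hypothesis c_deg_le1 : forall i, c * (deg e i)%:R <= 1.

Lemma prio_step_ge (mu : R) (W : 'M[R]_m) :
  (forall i l, mu <= W i l) -> forall i l, mu <= prio_step e c W i l.
Proof.
move=> W_ge i l; rewrite prio_stepE.
have -> : mu = (1 - c * (deg e i)%:R) * mu + c * \sum_(j < m) adj R e i j * mu.
  by rewrite -mulr_suml sum_adj; ring.
rewrite lerD ?ler_wpM2l ?subr_ge0 //.
by apply: ler_sum => j _; rewrite /adj; case: (e i j); rewrite ?mul0r ?mul1r.
Qed.

Lemma prio_ge (mu : R) (W0 : 'M[R]_m) :
  (forall i l, mu <= W0 i l) -> forall k i l, mu <= prio e c W0 k i l.
Proof. by move=> W0_ge; elim=> [|k IH] //=; apply: prio_step_ge. Qed.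

End LowerBound.

Lemma weight_diag (R : nzRingType) (m : nat) (e : rel 'I_m) (c : R)
    (W0 : 'M[R]_m) (k : nat) (i : 'I_m) :
  irreflexive e ->
  weight e c W0 k i i =
    prio e c W0 k i i + \sum_(l < m | (l != i) && ~~ e i l) prio e c W0 k i l.
Proof. by move=> e_irr; rewrite /weight e_irr eqxx. Qed.

Theorem lemma3p1 (R : realFieldType) (m : nat) (e : rel 'I_m)
  (e_sym : symmetric e) (e_irr : irreflexive e)
  (e_conn : forall i j : 'I_m, connect e i j)
  (c : R) (c_pos : 0 < c) (c_lt : c * (maxdeg e)%:R < 1)
  (W0 : 'M[R]_m)
  (W0_pos : forall i j, 0 < W0 i j) (W0_lt1 : forall i j, W0 i j < 1)
  (W0_sum : forall i, \sum_(j < m) W0 i j = 1)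
  (mu0 : R)
  (mu0_lb : forall i j, mu0 <= W0 i j)
  (mu0_att : exists i j, W0 i j = mu0) :
  (forall (k : nat) (i : 'I_m), mu0 <= weight e c W0 k i i) /\
  (forall (k : nat) (i j : 'I_m), e i j -> mu0 <= weight e c W0 k i j) /\
  (forall (k : nat) (i j : 'I_m), j != i -> ~~ e i j -> weight e c W0 k i j = 0).
Proof.
have c_deg_le1 i : c * (deg e i)%:R <= 1.
  by apply: le_trans (ltW c_lt); rewrite ler_pM2l // ler_nat deg_le_maxdeg.
have prio_ge_mu0 := @prio_ge _ _ e c (ltW c_pos) c_deg_le1 _ _ mu0_lb.
have mu0_ge0 : 0 <= mu0 by case: mu0_att => i [j <-]; apply: ltW.
split; [|split].
- move=> k i; rewrite weight_diag // -[mu0]addr0 lerD //.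
  by apply: sumr_ge0 => l _; apply: le_trans (prio_ge_mu0 _ _ _).
- by move=> k i j eij; rewrite /weight eij.
- by move=> k i j nji neij; rewrite /weight (negbTE neij) (negbTE nji).
Qed.
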